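(* Let $P$ be an Eulerian poset of rank $d$ and $P^*$ its dual Eulerian poset. Then $$B(P;u,v)=(-u)^dB(P^*;u^{-1},v).$$
   Context: An Eulerian poset is a finite poset $P$ with least element $\hat0$, greatest element $\hat1$, all maximal chains of the same length $d$ (the rank), rank function $\rho(x)$ = length of any saturated chain from $\hat0$ to $x$, such that the Möbius function satisfies $\mu_P(x,y)=(-1)^{\rho(y)-\rho(x)}$ for $x\le y$. Intervals $[x,y]=\{z:x\le z\le y\}$ are Eulerian of rank $\rho(y)-\rho(x)$; the dual poset $P^*$ (reversed order) is Eulerian of rank $d$ with rank function $d-\rho$. Define $G(P,t),H(P,t)\in\mathbb{Z}[t]$ recursively: $G=H=1$ if $d=0$; for $d>0$, $H(P,t)=\sum_{\hat0<x\le\hat1}(t-1)^{\rho(x)-1}G([x,\hat1],t)$ and $G(P,t)=\tau_{<d/2}((1-t)H(P,t))$, where $\tau_{<r}(\sum a_it^i)=\sum_{i<r}a_it^i$. Define $B(P;u,v)\in\mathbb{Z}[u,v]$ recursively: $B(P;u,v)=1$ if $d=0$, and for $d>0$ by $\sum_{\hat0\le x\le\hat1}B([\hat0,x];u,v)u^{d-\rho(x)}G([x,\hat1],u^{-1}v)=G(P,uv)$ (the term $x=\hat1$ being $B(P;u,v)$). *)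

From HB Require Import structures.
From mathcomp Require Import all_boot all_order all_algebra.
Set Implicit Arguments. Unset Strict Implicit. Unset Printing Implicit Defensive.
Import Order.TTheory GRing.Theory Num.Theory.
Local Open Scope ring_scope.

(* A finite bounded poset is a [finTBPOrderType]; \bot = 0^, \top = 1^.
   Its dual is [T^d] (Order.dual). *)

Section EulerianDefs.
Variables (disp : Order.disp_t) (T : finTBPOrderType disp).

Definition covers (x y : T) : bool :=
  (x < y)%O && [forall z, ~~ ((x < z)%O && (z < y)%O)].

(* saturated chain x = z0 <c z1 <c ... <c zk = y, given as s = [:: z1; ...; zk];
   its length is k = size s *)
Definition satchain (x y : T) (s : seq T) : bool :=
  path covers x s && (last x s == y).

(* Moebius function, by the usual recursion (fuel #|T| suffices) *)
Fixpoint muf (n : nat) (x y : T) : int :=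
  match n with
  | 0 => 0
  | n'.+1 => if x == y then 1
             else if (x <= y)%O then
               - \sum_(z | (x <= z)%O && (z < y)%O) muf n' x z
             else 0
  end.
Definition mobius (x y : T) : int := muf #|T| x y.

Definition eulerian (rho : T -> nat) (d : nat) : Prop :=
  [/\ forall s, satchain Order.bottom Order.top s -> size s = d,
      forall x s, satchain Order.bottom x s -> size s = rho x
    & forall x y, (x <= y)%O -> mobius x y = (-1) ^+ (rho y - rho x)].

Variable rho : T -> nat.

Definition rk (x y : T) : nat := (rho y - rho x)%N.

(* tau_{< r/2} : keep the monomials t^i with i < r/2, i.e. i < uphalf r *)
Definition trunc_half (r : nat) (p : {poly int}) : {poly int} :=
  take_poly (uphalf r) p.

(* G([x,y], t), by recursion on the interval (fuel #|T| suffices) *)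
Fixpoint Gf (n : nat) (x y : T) : {poly int} :=
  match n with
  | 0 => 1
  | n'.+1 => if x == y then 1
             else trunc_half (rk x y)
               ((1 - 'X) * \sum_(z | (x < z)%O && (z <= y)%O)
                              ('X - 1) ^+ (rk x z).-1 * Gf n' z y)
  end.
Definition Gpoly (x y : T) : {poly int} := Gf #|T| x y.

Definition Hpoly (x y : T) : {poly int} :=
  \sum_(z | (x < z)%O && (z <= y)%O) ('X - 1) ^+ (rk x z).-1 * Gpoly z y.

Definition evalZ (K : fieldType) (p : {poly int}) (t : K) : K :=
  (map_poly (fun c : int => c%:~R) p).[t].

(* B([x,y]; u, v) evaluated at u, v in a field K (u <> 0), defined by
   sum_{x <= z <= y} B([x,z];u,v) u^{rk z y} G([z,y], u^{-1} v) = G([x,y], u v) *)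
Fixpoint Bf (K : fieldType) (n : nat) (u v : K) (x y : T) : K :=
  match n with
  | 0 => 1
  | n'.+1 => if x == y then 1
             else evalZ (Gpoly x y) (u * v)
                  - \sum_(z | (x <= z)%O && (z < y)%O)
                      Bf n' u v x z * u ^+ (rk z y) * evalZ (Gpoly z y) (u^-1 * v)
  end.
Definition Bval (K : fieldType) (u v : K) (x y : T) : K := Bf #|T| u v x y.

Definition Bposet (K : fieldType) (u v : K) : K := Bval u v Order.bottom Order.top.

End EulerianDefs.

From Pilot Require Import Defs.
From HB Require Import structures.
From mathcomp Require Import all_boot all_order all_algebra.
From mathcomp Require Import zify ring.
Set Implicit Arguments. Unset Strict Implicit. Unset Printing Implicit Defensive.
Import Order.TTheory GRing.Theory Num.Theory.
Local Open Scope ring_scope.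

(* Work in the incidence algebra of [P].  For the kernel [K(x, y) = (t - 1)^rk],
   the Eulerian condition says that [(-1)^rk K] is the inverse of [K], and the
   recursion defining [G] amounts to the Kazhdan-Lusztig-Stanley relation
   [K * G = t^rk G(1/t)].  The same relation holds for [G^d(x, y)], the [G] of the
   interval [[y, x]] of the dual poset, and since a palindromic polynomial of
   degree < rk/2 vanishes, [(-1)^rk G^d] is the inverse of [G].  The definition
   of [B] reads [B * u^rk G(v/u) = G(uv)]; the same relation for the dual poset,
   twisted by [(-u)^rk] and combined with this inverse, shows that
   [(-u)^rk B(P^d; 1/u, v)] satisfies the defining relation of [B(P; u, v)], and
   unitriangular factors can be cancelled in the incidence algebra. *)

Section FiniteOrderInduction.
Variables (disp : Order.disp_t) (T : finPOrderType disp).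

Definition nbelow (y : T) : nat := #|[set w | (w < y)%O]|.
Definition nabove (x : T) : nat := #|[set w | (x < w)%O]|.

Lemma nbelow_lt (z y : T) : (z < y)%O -> (nbelow z < nbelow y)%N.
Proof.
move=> zy; apply: proper_card; apply/properP; split.
  by apply/subsetP => w; rewrite !inE => /lt_trans; apply.
by exists z; rewrite !inE ?zy ?ltxx.
Qed.

Lemma nabove_lt (x z : T) : (x < z)%O -> (nabove z < nabove x)%N.
Proof.
move=> xz; apply: proper_card; apply/properP; split.
  by apply/subsetP => w; rewrite !inE; apply: lt_trans.
by exists z; rewrite !inE ?xz ?ltxx.
Qed.

Lemma nbelow_card (y : T) : (nbelow y < #|T|)%N.
Proof.
rewrite -cardsT; apply: proper_card; apply/properP; split; first exact: subsetT.
by exists y; rewrite !inE ?ltxx.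
Qed.

Lemma nabove_card (x : T) : (nabove x < #|T|)%N.
Proof.
rewrite -cardsT; apply: proper_card; apply/properP; split; first exact: subsetT.
by exists x; rewrite !inE ?ltxx.
Qed.

Lemma cardT_pred (x : T) : #|T| = #|T|.-1.+1.
Proof. by rewrite prednK // (leq_ltn_trans _ (nabove_card x)). Qed.

Lemma lt_wf_ind (P : T -> Prop) :
  (forall y, (forall z, (z < y)%O -> P z) -> P y) -> forall y, P y.
Proof.
move=> IH y; elim: {y}(nbelow y).+1 {-2}y (ltnSn (nbelow y)) => // n IHn y lt_y.
by apply: IH => z zy; apply: IHn; apply: leq_trans (nbelow_lt zy) _.
Qed.

Lemma gt_wf_ind (P : T -> Prop) :
  (forall x, (forall z, (x < z)%O -> P z) -> P x) -> forall x, P x.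
Proof.
move=> IH x; elim: {x}(nabove x).+1 {-2}x (ltnSn (nabove x)) => // n IHn x lt_x.
by apply: IH => z xz; apply: IHn; apply: leq_trans (nabove_lt xz) _.
Qed.

End FiniteOrderInduction.

Section IncidenceAlgebra.
Variables (disp : Order.disp_t) (T : finPOrderType disp) (R : pzRingType).
Implicit Types (f g h : T -> T -> R) (x y z : T).

Definition conv f g x y : R := \sum_(z | (x <= z)%O && (z <= y)%O) f x z * g z y.

Definition delta x y : R := (x == y)%:R.

Definition eq_incidence f g := forall x y, (x <= y)%O -> f x y = g x y.

Definition unit_diag f := forall x, f x x = 1.

Lemma conv_assoc f g h x y : conv (conv f g) h x y = conv f (conv g h) x y.
Proof.
rewrite /conv; under eq_bigr do rewrite big_distrl /=.
under [RHS]eq_bigr do rewrite big_distrr /=.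
rewrite (exchange_big_dep (fun w => (x <= w)%O && (w <= y)%O)) /=; last first.
  by move=> z w /andP[_ zy] /andP[xw wz]; rewrite xw (le_trans wz zy).
apply: eq_bigr => w /andP[xw wy]; apply: eq_big => [z|z _]; last by rewrite mulrA.
apply/idP/idP => [/andP[/andP[_ ->] /andP[_ ->]] //|/andP[wz zy]].
by rewrite (le_trans xw wz) zy xw wz.
Qed.

Lemma eq_conv f f' g g' :
  eq_incidence f f' -> eq_incidence g g' -> forall x y, conv f g x y = conv f' g' x y.
Proof. by move=> ff' gg' x y; apply: eq_bigr => z /andP[xz zy]; rewrite ff' ?gg'. Qed.

Lemma conv_split_bot f g x y : (x <= y)%O ->
  conv f g x y = f x x * g x y + \sum_(z | (x < z)%O && (z <= y)%O) f x z * g z y.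
Proof.
move=> xy; rewrite /conv (bigD1 x) /=; last by rewrite lexx xy.
congr (_ + _); apply: eq_bigl => z.
by rewrite lt_def; case: (z == x); rewrite ?andbF ?andbT.
Qed.

Lemma conv_split_top f g x y : (x <= y)%O ->
  conv f g x y = f x y * g y y + \sum_(z | (x <= z)%O && (z < y)%O) f x z * g z y.
Proof.
move=> xy; rewrite /conv (bigD1 y) /=; last by rewrite lexx xy.
congr (_ + _); apply: eq_bigl => z.
by rewrite (lt_def z y) [y == z]eq_sym; case: (z == y); rewrite ?andbF ?andbT.
Qed.

Lemma conv_delta_l f : eq_incidence (conv delta f) f.
Proof.
move=> x y xy; rewrite conv_split_bot // big1 ?addr0 /delta ?eqxx ?mul1r //.
by move=> z /andP[xz _]; rewrite (lt_eqF xz) mul0r.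
Qed.

Lemma unit_diag_conv f g : unit_diag f -> unit_diag g -> unit_diag (conv f g).
Proof.
move=> f1 g1 x; rewrite conv_split_bot // f1 g1 mulr1 big1 ?addr0 // => z.
by case/andP=> /lt_le_trans/[apply]; rewrite ltxx.
Qed.

Lemma conv_cancel_l f g h : unit_diag f ->
  eq_incidence (conv f g) (conv f h) -> eq_incidence g h.
Proof.
move=> f1 fgh x y; elim/gt_wf_ind: x => x IH xy.
have := fgh x y xy; rewrite !conv_split_bot // f1 !mul1r.
rewrite [X in _ = _ + X](eq_bigr (fun z => f x z * g z y)) => [/addIr //|z /andP[xz zy]].
by rewrite IH.
Qed.

Lemma conv_cancel_r f g h : unit_diag f ->
  eq_incidence (conv g f) (conv h f) -> eq_incidence g h.
Proof.
move=> f1 gfh x y; elim/lt_wf_ind: y => y IH xy.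
have := gfh x y xy; rewrite !conv_split_top // f1 !mulr1.
rewrite [X in _ = _ + X](eq_bigr (fun z => g x z * f z y)) => [/addIr //|z /andP[xz zy]].
by rewrite IH.
Qed.

End IncidenceAlgebra.

Arguments delta {disp T R} x y.

Lemma conv_dual (disp : Order.disp_t) (T : finPOrderType disp) (R : comPzRingType)
    (f g : T -> T -> R) (x y : T) :
  conv (T := T^d) f g y x = conv (fun a b => g b a) (fun a b => f b a) x y.
Proof.
rewrite /conv; apply: eq_big => [z|z _]; last by rewrite mulrC.
by rewrite !leEdual andbC.
Qed.

Section Reciprocal.
Variable R : comNzRingType.
Implicit Types p q : {poly R}.

(* [t^r p(1/t)] when [p] has degree at most [r]. *)
Definition recip (r : nat) p : {poly R} := \poly_(i < r.+1) p`_(r - i).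

Lemma coef_recip r p i : (recip r p)`_i = if (i <= r)%N then p`_(r - i) else 0.
Proof. by rewrite coef_poly ltnS. Qed.

Lemma recipD r p q : recip r (p + q) = recip r p + recip r q.
Proof. by apply/polyP => i; rewrite coefD !coef_recip coefD; case: ifP; rewrite ?addr0. Qed.

Lemma recipN r p : recip r (- p) = - recip r p.
Proof. by apply/polyP => i; rewrite coefN !coef_recip coefN; case: ifP; rewrite ?oppr0. Qed.

Lemma recipZ r c p : recip r (c *: p) = c *: recip r p.
Proof. by apply/polyP => i; rewrite coefZ !coef_recip coefZ; case: ifP; rewrite ?mulr0. Qed.

Lemma recip_sum r I (s : seq I) (P : pred I) (F : I -> {poly R}) :
  recip r (\sum_(i <- s | P i) F i) = \sum_(i <- s | P i) recip r (F i).
Proof.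
apply: (big_morph (recip r) (recipD r)).
by apply/polyP => i; rewrite coef_recip !coef0; case: ifP.
Qed.

Lemma recip_sign r k p : recip r ((-1) ^+ k * p) = (-1) ^+ k * recip r p.
Proof. by rewrite -signr_odd !mulr_sign; case: (odd k); rewrite ?recipN. Qed.

Lemma recipXn r k : (k <= r)%N -> recip r 'X^k = 'X^(r - k).
Proof.
move=> kr; apply/polyP => i; rewrite coef_recip !coefXn.
case: (leqP i r) => ir; last by case: eqP => //; lia.
by congr (_ %:R); apply/eqP/eqP; lia.
Qed.

Lemma poly_coef_expansion n p : (size p <= n)%N -> p = \sum_(i < n) p`_i *: 'X^i.
Proof.
move=> szp; rewrite -poly_def; apply/polyP => i; rewrite coef_poly.
by case: ltnP => // ni; rewrite nth_default // (leq_trans szp).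
Qed.

Lemma recip_expansion r p : (size p <= r.+1)%N ->
  recip r p = \sum_(i < r.+1) p`_i *: 'X^(r - i).
Proof.
move=> szp; rewrite [in LHS](poly_coef_expansion szp) recip_sum.
by apply: eq_bigr => i _; rewrite recipZ recipXn // -ltnS.
Qed.

Lemma recipM a b p q : (size p <= a.+1)%N -> (size q <= b.+1)%N ->
  recip (a + b) (p * q) = recip a p * recip b q.
Proof.
move=> szp szq; rewrite {1}(poly_coef_expansion szp) {1}(poly_coef_expansion szq).
rewrite (recip_expansion szp) (recip_expansion szq) !mulr_suml recip_sum.
apply: eq_bigr => i _; rewrite !mulr_sumr recip_sum; apply: eq_bigr => j _.
have ltia := ltn_ord i; have ltjb := ltn_ord j.
rewrite -!scalerAl -!scalerAr !scalerA -!exprD recipZ recipXn; last by lia.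
by have -> : (a + b - (i + j) = a - i + (b - j))%N by lia.
Qed.

Lemma recip_X_sub1 k : recip k (('X - 1) ^+ k) = (1 - 'X) ^+ k.
Proof.
elim: k => [|k IHk]; first by apply/polyP => -[|i]; rewrite !expr0 coef_recip !coef1.
rewrite -[k.+1]add1n exprD expr1 recipM -?polyC1 ?size_exp_XsubC ?size_XsubC //.
rewrite polyC1 IHk exprS; congr (_ * _); apply/polyP => i.
by rewrite coef_recip !coefB !coefX !coef1; case: i => [|[|i]] /=; rewrite ?subr0.
Qed.

Lemma recip_fixed_small_eq0 r p :
  (size p <= uphalf r)%N -> recip r p = p -> p = 0.
Proof.
move=> szp fixp; apply/polyP => i; rewrite coef0.
case: (ltnP i (uphalf r)) => [ir|]; last by move=> ri; rewrite nth_default // (leq_trans szp).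
have := congr1 (fun p => p`_i) fixp; rewrite /= coef_recip.
have -> : (i <= r)%N by move: ir; rewrite uphalfE; lia.
move=> <-; rewrite nth_default // (leq_trans szp) //.
by move: ir; rewrite uphalfE; lia.
Qed.

End Reciprocal.

(* [numDomainType] only serves to cancel the middle coefficient, from [a = - a]. *)
Lemma recip_take_uphalf (R : numDomainType) r (a : {poly R}) :
  (size a <= r.+1)%N -> recip r a = - a ->
  recip r (take_poly (uphalf r) (- a)) = take_poly (uphalf r) (- a) + a.
Proof.
move=> sza antia; apply/polyP => i.
have coef_anti j : (j <= r)%N -> a`_(r - j) = - a`_j.
  move=> jr; have := congr1 (fun p : {poly R} => p`_j) antia.
  by rewrite /= coef_recip coefN jr.
rewrite coefD coef_recip !coef_take_poly !coefN.
case: (leqP i r) => ir; last first.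
  by rewrite nth_default ?(leq_trans sza) // oppr0; case: ifP; rewrite addr0.
rewrite coef_anti // opprK.
case: (ltnP i (uphalf r)) => h1; case: (ltnP (r - i) (uphalf r)) => h2.
- by move: h1 h2; rewrite uphalfE; lia.
- by rewrite addNr.
- by rewrite add0r.
have ri : (r - i)%N = i by move: h1 h2; rewrite uphalfE; lia.
by have := coef_anti i ir; rewrite ri add0r => /eqP; rewrite eq_sym eqNr => /eqP ->.
Qed.

Lemma size_sign (R : nzRingType) (k : nat) (p : {poly R}) : size ((-1) ^+ k * p) = size p.
Proof. by rewrite -signr_odd mulr_sign; case: (odd k); rewrite ?size_polyN. Qed.

Section GradedPoset.
Variables (disp : Order.disp_t) (T : finTBPOrderType disp) (rho : T -> nat).
Hypothesis rho_lt : forall x y : T, (x < y)%O -> (rho x < rho y)%N.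
Local Notation rk := (rk rho).
Implicit Types x y z : T.

Lemma rho_le x y : (x <= y)%O -> (rho x <= rho y)%N.
Proof. by rewrite le_eqVlt => /predU1P[->|/rho_lt/ltnW]. Qed.

Lemma rkxx x : rk x x = 0%N.
Proof. exact: subnn. Qed.

Lemma rk_add x z y : (x <= z)%O -> (z <= y)%O -> rk x y = (rk x z + rk z y)%N.
Proof. by move=> /rho_le xz /rho_le zy; rewrite /Defs.rk; lia. Qed.

Lemma rk_gt0 x y : (x < y)%O -> (0 < rk x y)%N.
Proof. by move=> /rho_lt; rewrite /Defs.rk; lia. Qed.

Definition twist (R : comPzRingType) (c : R) (f : T -> T -> R) x y : R :=
  c ^+ rk x y * f x y.

Lemma twist_conv (R : comPzRingType) (c : R) f g :
  eq_incidence (twist c (conv f g)) (conv (twist c f) (twist c g)).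
Proof.
move=> x y xy; rewrite /twist /conv mulr_sumr; apply: eq_bigr => z /andP[xz zy].
by rewrite (rk_add xz zy) exprD; ring.
Qed.

Lemma eq_twist (R : comPzRingType) (c : R) f g :
  eq_incidence f g -> eq_incidence (twist c f) (twist c g).
Proof. by move=> fg x y xy; rewrite /twist fg. Qed.

Lemma twistM (R : comPzRingType) (a b : R) f x y :
  twist a (twist b f) x y = twist (a * b) f x y.
Proof. by rewrite /twist exprMn mulrA. Qed.

Lemma twist_delta (R : comPzRingType) (c : R) x y : twist c delta x y = delta x y.
Proof. by rewrite /twist /delta; case: eqP => [->|]; rewrite ?rkxx ?mul1r ?mulr0. Qed.

Lemma unit_diag_twist (R : comPzRingType) (c : R) f : unit_diag f -> unit_diag (twist c f).
Proof. by move=> f1 x; rewrite /twist rkxx mul1r f1. Qed.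

Definition kernel x y : {poly int} := ('X - 1) ^+ rk x y.

Definition recipf (f : T -> T -> {poly int}) x y := recip (rk x y) (f x y).

Definition deg_le_rank (f : T -> T -> {poly int}) :=
  forall x y, (x <= y)%O -> (size (f x y) <= (rk x y).+1)%N.

Definition low_degree (f : T -> T -> {poly int}) :=
  forall x y, (x < y)%O -> (size (f x y) <= uphalf (rk x y))%N.

Lemma unit_diag_kernel : unit_diag kernel.
Proof. by move=> x; rewrite /kernel rkxx. Qed.

Lemma unit_diag_recipf f : unit_diag f -> unit_diag (recipf f).
Proof.
by move=> f1 x; rewrite /recipf f1 rkxx; apply/polyP => -[|i]; rewrite coef_recip //= coef1.
Qed.

Lemma deg_le_rank_kernel : deg_le_rank kernel.
Proof. by move=> x y _; rewrite /kernel -polyC1 size_exp_XsubC. Qed.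

Lemma deg_le_rank_low f : unit_diag f -> low_degree f -> deg_le_rank f.
Proof.
move=> f1 lowf x y; rewrite le_eqVlt => /predU1P[<-|xy]; first by rewrite f1 size_poly1.
by apply: leq_trans (lowf x y xy) _; rewrite uphalfE; lia.
Qed.

Lemma low_degree_twist f : low_degree f -> low_degree (twist (-1) f).
Proof. by move=> lowf x y xy; rewrite /twist size_sign lowf. Qed.

Lemma low_degree_conv f g : unit_diag f -> unit_diag g ->
  low_degree f -> low_degree g -> low_degree (conv f g).
Proof.
move=> f1 g1 lowf lowg x y xy; apply: leq_trans (size_sum _ _ _) _.
apply/bigmax_leqP => z /andP[xz zy].
case: (eqVneq z x) => [->|zx]; first by rewrite f1 mul1r lowg.
case: (eqVneq z y) => [->|zy']; first by rewrite g1 mulr1 lowf.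
have ltxz : (x < z)%O by rewrite lt_def zx.
have ltzy : (z < y)%O by rewrite lt_def eq_sym zy'.
apply: leq_trans (size_polyMleq _ _) _.
by have := lowf _ _ ltxz; have := lowg _ _ ltzy; rewrite (rk_add xz zy) !uphalfE; lia.
Qed.

Lemma recipf_conv f g : deg_le_rank f -> deg_le_rank g ->
  eq_incidence (recipf (conv f g)) (conv (recipf f) (recipf g)).
Proof.
move=> degf degg x y xy; rewrite /recipf /conv recip_sum; apply: eq_bigr => z /andP[xz zy].
by rewrite (rk_add xz zy) recipM ?degf ?degg.
Qed.

Lemma recipf_kernel x y : recipf kernel x y = twist (-1) kernel x y.
Proof. by rewrite /recipf recip_X_sub1 /twist -exprMn mulN1r opprB. Qed.

Lemma recipf_twist f x y : recipf (twist (-1) f) x y = twist (-1) (recipf f) x y.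
Proof. exact: recip_sign. Qed.

Hypothesis rho_euler : forall x y : T, (x < y)%O ->
  \sum_(z | (x <= z)%O && (z <= y)%O) (-1) ^+ rk x z = 0 :> int.

Lemma conv_twist_kernel : eq_incidence (conv (twist (-1) kernel) kernel) delta.
Proof.
move=> x y xy; rewrite /conv.
rewrite (eq_bigr (fun z => ((-1) ^+ rk x z : int)%:P * ('X - 1) ^+ rk x y)); last first.
  move=> z /andP[xz zy]; rewrite /twist /kernel (rk_add xz zy) exprD mulrA.
  by rewrite rmorphXn rmorphN1.
rewrite -mulr_suml -rmorph_sum /=; case: (eqVneq x y) => [<-|nxy].
  rewrite (big_pred1 x) /delta ?eqxx ?rkxx ?expr0 ?mulr1 //.
  by move=> z; rewrite /= -eq_le eq_sym.
by rewrite rho_euler ?mul0r /delta ?(negbTE nxy) // lt_def eq_sym nxy.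
Qed.

End GradedPoset.

Section GPolynomial.
Variables (disp : Order.disp_t) (T : finTBPOrderType disp) (rho : T -> nat).
Local Notation rk := (rk rho).
Local Notation Gp := (Gpoly rho).
Implicit Types x y z : T.

Lemma Gf_fuel n x y : (nabove x < n)%N -> Gf rho n x y = Gf rho n.+1 x y.
Proof.
elim: n x y => [//|n IHn] x y lt_xn /=; case: eqP => // _.
congr (trunc_half _ (_ * _)); apply: eq_bigr => z /andP[xz _].
by rewrite IHn //; have := nabove_lt xz; lia.
Qed.

Lemma Gpoly_xx x : Gp x x = 1.
Proof. by rewrite /Gpoly (cardT_pred x) /= eqxx. Qed.

Lemma Gpoly_rec x y : x != y -> Gp x y = trunc_half (rk x y)
  ((1 - 'X) * \sum_(z | (x < z)%O && (z <= y)%O) ('X - 1) ^+ (rk x z).-1 * Gp z y).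
Proof.
move=> nxy; rewrite /Gpoly (cardT_pred x) /= (negbTE nxy).
congr (trunc_half _ (_ * _)); apply: eq_bigr => z /andP[xz _]; rewrite Gf_fuel //.
by rewrite -ltnS -(cardT_pred x); have := nabove_lt xz; have := nabove_card x; lia.
Qed.

Lemma low_degree_Gpoly : low_degree rho Gp.
Proof. by move=> x y /lt_eqF/negbT nxy; rewrite Gpoly_rec //; apply: size_take_poly. Qed.

Hypothesis rho_lt : forall x y : T, (x < y)%O -> (rho x < rho y)%N.
Hypothesis rho_euler : forall x y : T, (x < y)%O ->
  \sum_(z | (x <= z)%O && (z <= y)%O) (-1) ^+ rk x z = 0 :> int.

Lemma deg_le_rank_Gpoly : deg_le_rank rho Gp.
Proof. exact: deg_le_rank_low Gpoly_xx low_degree_Gpoly. Qed.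

(* With [A] the part of the convolution over [x < z], the inverse kernel and the
   induction hypothesis give [recip A = - A], while [G] is the truncation of [- A]
   below degree [rk / 2]. *)
Lemma conv_kernel_Gpoly : eq_incidence (conv (kernel rho) Gp) (recipf rho Gp).
Proof.
move=> x y; elim/gt_wf_ind: x => x IH xy.
case: (eqVneq x y) => [<-|nxy].
  rewrite (unit_diag_conv (unit_diag_kernel rho) Gpoly_xx).
  by rewrite (unit_diag_recipf rho Gpoly_xx).
have ltxy : (x < y)%O by rewrite lt_def eq_sym nxy.
set A := \sum_(z | (x < z)%O && (z <= y)%O) kernel rho x z * Gp z y.
have convE : conv (kernel rho) Gp x y = Gp x y + A.
  by rewrite conv_split_bot // /kernel rkxx expr0 mul1r.
have GpE : Gp x y = take_poly (uphalf (rk x y)) (- A).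
  rewrite Gpoly_rec // mulr_sumr -sumrN; congr take_poly; apply: eq_bigr => z /andP[xz _].
  by rewrite /kernel -[in RHS](prednK (rk_gt0 rho_lt xz)) exprS -opprB mulNr mulrA.
have szA : (size A <= (rk x y).+1)%N.
  apply: leq_trans (size_sum _ _ _) _; apply/bigmax_leqP => z /andP[xz zy].
  apply: leq_trans (size_polyMleq _ _) _.
  have := deg_le_rank_kernel rho (ltW xz); have := deg_le_rank_Gpoly zy.
  by rewrite (rk_add rho_lt (ltW xz) zy); lia.
have recipA : recip (rk x y) A = - A.
  have E : Gp x y = Gp x y + A + recip (rk x y) A.
    rewrite -convE -[LHS](conv_delta_l Gp xy).
    rewrite -(eq_conv (conv_twist_kernel rho_lt rho_euler) (fun _ _ _ => erefl)) conv_assoc.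
    rewrite conv_split_bot // (unit_diag_twist rho (-1) (unit_diag_kernel rho)) mul1r.
    rewrite recip_sum; congr (_ + _); apply: eq_bigr => z /andP[xz zy].
    rewrite IH // -recipf_kernel /recipf (rk_add rho_lt (ltW xz) zy).
    by rewrite recipM ?(deg_le_rank_kernel rho (ltW xz)) ?(deg_le_rank_Gpoly zy).
  by apply: (addrI (Gp x y + A)); rewrite -E addrK.
by rewrite convE /recipf GpE recip_take_uphalf // -GpE.
Qed.

Lemma conv_twist_Gpoly_inv (F : T -> T -> {poly int}) :
  unit_diag F -> low_degree rho F -> eq_incidence (conv F (kernel rho)) (recipf rho F) ->
  eq_incidence (conv (twist rho (-1) F) Gp) delta.
Proof.
move=> F1 lowF convFK.
have degF := deg_le_rank_low F1 lowF.
have degtF : deg_le_rank rho (twist rho (-1) F).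
  by move=> x y xy; rewrite /twist size_sign degF.
have recip_tF : eq_incidence (recipf rho (twist rho (-1) F))
                             (conv (twist rho (-1) F) (twist rho (-1) (kernel rho))).
  move=> x y xy; rewrite recipf_twist /twist -convFK // -/(twist rho _ _ x y).
  exact: twist_conv.
have recip_conv : eq_incidence (recipf rho (conv (twist rho (-1) F) Gp))
                               (conv (twist rho (-1) F) Gp).
  move=> x y xy; rewrite recipf_conv //; last exact: deg_le_rank_Gpoly.
  rewrite (eq_conv recip_tF (fun a b ab => esym (conv_kernel_Gpoly ab))) conv_assoc.
  apply: eq_conv => // a b ab; rewrite -conv_assoc -(conv_delta_l Gp ab).
  exact: eq_conv (conv_twist_kernel rho_lt rho_euler) (fun _ _ _ => erefl) a b.
have low_conv := low_degree_conv rho_lt (unit_diag_twist rho (-1) F1) Gpoly_xx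
  (low_degree_twist lowF) low_degree_Gpoly.
move=> x y; rewrite le_eqVlt => /predU1P[<-|xy].
  by rewrite (unit_diag_conv (unit_diag_twist rho (-1) F1) Gpoly_xx) /delta eqxx.
rewrite /delta (lt_eqF xy); apply: recip_fixed_small_eq0 (low_conv _ _ xy) _.
exact: recip_conv (ltW xy).
Qed.

End GPolynomial.

Section EulerianRank.
Variables (disp : Order.disp_t) (T : finTBPOrderType disp).
Implicit Types x y z : T.

Lemma satchain_cat x y z s1 s2 :
  satchain x y s1 -> satchain y z s2 -> satchain x z (s1 ++ s2).
Proof. by rewrite /satchain cat_path last_cat => /andP[-> /eqP->] /andP[-> ->]. Qed.

Lemma satchain_exists x y : (x <= y)%O -> exists s, satchain x y s.
Proof.
elim/lt_wf_ind: y x => y IHy x; elim/gt_wf_ind: x => x IHx xy.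
case: (eqVneq x y) => [<-|nxy]; first by exists [::]; rewrite /satchain /= eqxx.
have ltxy : (x < y)%O by rewrite lt_def eq_sym nxy.
case cov: (covers x y); first by exists [:: y]; rewrite /satchain /= cov eqxx.
move: cov; rewrite /covers ltxy => /negbT/forallPn[z]; rewrite negbK => /andP[xz zy].
have [s1 ch1] := IHy z zy x (ltW xz).
have [s2 ch2] := IHx z xz (ltW zy).
by exists (s1 ++ s2); apply: satchain_cat ch1 ch2.
Qed.

Lemma muf_fuel n x y : (nbelow y < n)%N -> muf n x y = muf n.+1 x y.
Proof.
elim: n x y => [//|n IHn] x y lt_yn /=; case: eqP => // _; case: ifP => // _.
congr (- _); apply: eq_bigr => z /andP[_ zy].
by rewrite IHn //; have := nbelow_lt zy; lia.
Qed.

Lemma mobius_rec x y : x != y -> (x <= y)%O ->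
  mobius x y = - \sum_(z | (x <= z)%O && (z < y)%O) mobius x z.
Proof.
move=> nxy xy; rewrite /mobius (cardT_pred x) /= (negbTE nxy) xy.
congr (- _); apply: eq_bigr => z /andP[_ zy]; rewrite muf_fuel //.
by rewrite -ltnS -(cardT_pred x); have := nbelow_lt zy; have := nbelow_card y; lia.
Qed.

Variables (rho : T -> nat) (d : nat).
Hypothesis eulerP : eulerian rho d.

Lemma eulerian_rho_chain x y s : (x <= y)%O -> satchain x y s -> rho y = (rho x + size s)%N.
Proof.
case: eulerP => _ rhoE _ xy chs.
have [s0 ch0] := satchain_exists (le0x x).
by rewrite -(rhoE _ _ (satchain_cat ch0 chs)) -(rhoE _ _ ch0) size_cat.
Qed.

Lemma eulerian_rho_lt x y : (x < y)%O -> (rho x < rho y)%N.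
Proof.
move=> xy; have [[|z s] chs] := satchain_exists (ltW xy).
  by move: chs xy; rewrite /satchain /= => /eqP->; rewrite ltxx.
by rewrite (eulerian_rho_chain (ltW xy) chs) /= addnS ltnS leq_addr.
Qed.

Lemma eulerian_rho_bot : rho Order.bottom = 0%N.
Proof. by case: eulerP => _ rhoE _; rewrite -(rhoE _ [::]) // /satchain /= eqxx. Qed.

Lemma eulerian_rho_top : rho Order.top = d.
Proof.
case: eulerP => rankE rhoE _; have [s chs] := satchain_exists (le0x (Order.top : T)).
by rewrite -(rhoE _ _ chs) (rankE _ chs).
Qed.

Lemma eulerian_rho_le_top x : (rho x <= d)%N.
Proof.
rewrite -eulerian_rho_top; case: (eqVneq x Order.top) => [->//|ntop].
by apply/ltnW/eulerian_rho_lt; rewrite lt_def eq_sym ntop lex1.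
Qed.

Lemma eulerian_alt_sum x y : (x < y)%O ->
  \sum_(z | (x <= z)%O && (z <= y)%O) (-1) ^+ rk rho x z = 0 :> int.
Proof.
case: eulerP => _ _ muE xy.
rewrite (eq_bigr (mobius x)) => [|z /andP[xz _]]; last by rewrite muE.
rewrite (bigD1 y) /= ?lexx ?ltW // mobius_rec ?(lt_eqF xy) ?ltW //.
rewrite [X in _ + X](eq_bigl (fun z => (x <= z)%O && (z < y)%O)) ?addNr // => z.
by rewrite (lt_def z y) [y == z]eq_sym; case: (z == y); rewrite ?andbF ?andbT.
Qed.

End EulerianRank.

Section DualPoset.
Variables (disp : Order.disp_t) (T : finTBPOrderType disp) (rho : T -> nat) (d : nat).
Hypothesis rho_lt : forall x y : T, (x < y)%O -> (rho x < rho y)%N.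
Hypothesis rho_euler : forall x y : T, (x < y)%O ->
  \sum_(z | (x <= z)%O && (z <= y)%O) (-1) ^+ rk rho x z = 0 :> int.
Hypothesis rho_le_top : forall x : T, (rho x <= d)%N.

Definition rho_dual (x : T^d) : nat := (d - rho x)%N.

Lemma rk_dual (x y : T) : rk rho_dual y x = rk rho x y.
Proof. by rewrite /Defs.rk /rho_dual; have := rho_le_top x; have := rho_le_top y; lia. Qed.

Lemma rho_dual_lt (x y : T^d) : (x < y)%O -> (rho_dual x < rho_dual y)%N.
Proof. by rewrite ltEdual /rho_dual => /rho_lt; have := rho_le_top x; lia. Qed.

Lemma rho_dual_euler (x y : T^d) : (x < y)%O ->
  \sum_(z | (x <= z)%O && (z <= y)%O) (-1) ^+ rk rho_dual x z = 0 :> int.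
Proof.
rewrite ltEdual => yx.
transitivity ((-1) ^+ rk rho y x *
  \sum_(z : T | ((y : T) <= z)%O && (z <= x)%O) (-1) ^+ rk rho y z : int); last first.
  by rewrite rho_euler // mulr0.
rewrite mulr_sumr; apply: eq_big => [z|z]; rewrite !leEdual; first by rewrite andbC.
case/andP=> zx yz.
rewrite rk_dual -exprD (rk_add rho_lt yz zx) addnAC addnn -mul2n exprD exprM.
by rewrite sqrrN !expr1n mul1r.
Qed.

Definition Gdual (x y : T) : {poly int} := Gpoly rho_dual y x.

Lemma unit_diag_Gdual : unit_diag Gdual.
Proof. by move=> x; apply: Gpoly_xx. Qed.

Lemma low_degree_Gdual : low_degree rho Gdual.
Proof. by move=> x y xy; rewrite /Gdual -rk_dual; apply: low_degree_Gpoly; rewrite ltEdual. Qed.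

Lemma conv_Gdual_kernel : eq_incidence (conv Gdual (kernel rho)) (recipf rho Gdual).
Proof.
move=> x y xy; rewrite /recipf /Gdual -rk_dual -/(recipf rho_dual _ y x).
rewrite -(conv_kernel_Gpoly rho_dual_lt rho_dual_euler) ?leEdual // conv_dual.
by apply: eq_bigr => z _; rewrite /kernel rk_dual.
Qed.

Lemma conv_twist_Gdual_Gpoly : eq_incidence (conv (twist rho (-1) Gdual) (Gpoly rho)) delta.
Proof.
exact: (conv_twist_Gpoly_inv rho_lt rho_euler unit_diag_Gdual low_degree_Gdual
  conv_Gdual_kernel).
Qed.

End DualPoset.

Section BPolynomial.
Variables (disp : Order.disp_t) (T : finTBPOrderType disp) (rho : T -> nat) (K : fieldType).
Implicit Types (x y z : T) (f g : T -> T -> {poly int}).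

Lemma evalZ_conv f g (t : K) x y :
  evalZ (conv f g x y) t = conv (fun a b => evalZ (f a b) t) (fun a b => evalZ (g a b) t) x y.
Proof.
by rewrite /evalZ rmorph_sum horner_sum; apply: eq_bigr => z _; rewrite rmorphM hornerM.
Qed.

Lemma evalZ_delta (t : K) x y : evalZ (delta x y) t = delta x y.
Proof. by rewrite /evalZ /delta; case: (x == y); rewrite ?rmorph1 ?rmorph0 hornerE. Qed.

Lemma evalZ_twist f (t : K) x y :
  evalZ (twist rho (-1) f x y) t = twist rho (-1) (fun a b => evalZ (f a b) t) x y.
Proof. by rewrite /evalZ /twist rmorphM hornerM rmorphXn rmorphN1 horner_exp hornerN hornerC. Qed.

Definition Geval (t : K) x y : K := evalZ (Gpoly rho x y) t.

Lemma unit_diag_evalZ f (t : K) : unit_diag f -> unit_diag (fun x y => evalZ (f x y) t).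
Proof. by move=> f1 x; rewrite f1 /evalZ rmorph1 hornerE. Qed.

Lemma unit_diag_Geval (t : K) : unit_diag (Geval t).
Proof. exact: unit_diag_evalZ (Gpoly_xx rho). Qed.

Lemma Bf_fuel n (u v : K) x y : (nbelow y < n)%N -> Bf rho n u v x y = Bf rho n.+1 u v x y.
Proof.
elim: n x y => [//|n IHn] x y lt_yn /=; case: eqP => // _.
congr (_ - _); apply: eq_bigr => z /andP[_ zy].
by rewrite IHn //; have := nbelow_lt zy; lia.
Qed.

Lemma Bval_xx (u v : K) x : Bval rho u v x x = 1.
Proof. by rewrite /Bval (cardT_pred x) /= eqxx. Qed.

Lemma Bval_rec (u v : K) x y : x != y -> Bval rho u v x y = Geval (u * v) x y
  - \sum_(z | (x <= z)%O && (z < y)%O) Bval rho u v x z * twist rho u (Geval (u^-1 * v)) z y.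
Proof.
move=> nxy; rewrite /Bval (cardT_pred x) /= (negbTE nxy); congr (_ - _).
apply: eq_bigr => z /andP[_ zy]; rewrite Bf_fuel -?mulrA //.
by rewrite -ltnS -(cardT_pred x); have := nbelow_lt zy; have := nbelow_card y; lia.
Qed.

Lemma conv_Bval_Geval (u v : K) :
  eq_incidence (conv (Bval rho u v) (twist rho u (Geval (u^-1 * v)))) (Geval (u * v)).
Proof.
move=> x y xy; rewrite conv_split_top // (unit_diag_twist rho u (unit_diag_Geval _)) mulr1.
case: (eqVneq x y) => [<-|nxy]; last by rewrite Bval_rec // subrK.
rewrite Bval_xx unit_diag_Geval big1 ?addr0 // => z /andP[xz zx].
by have := le_lt_trans xz zx; rewrite ltxx.
Qed.

End BPolynomial.

Section BDuality.
Variables (disp : Order.disp_t) (T : finTBPOrderType disp) (rho : T -> nat) (d : nat).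
Hypothesis rho_lt : forall x y : T, (x < y)%O -> (rho x < rho y)%N.
Hypothesis rho_euler : forall x y : T, (x < y)%O ->
  \sum_(z | (x <= z)%O && (z <= y)%O) (-1) ^+ rk rho x z = 0 :> int.
Hypothesis rho_le_top : forall x : T, (rho x <= d)%N.
Variables (K : fieldType) (u v : K).
Hypothesis u_neq0 : u != 0.

Let Gd (t : K) (x y : T) : K := evalZ (Gdual rho d x y) t.
Let Bd (x y : T) : K := Bval (rho_dual rho d) u^-1 v y x.

Lemma conv_twist_Gdual_Geval (t : K) :
  eq_incidence (conv (twist rho (-1) (Gd t)) (Geval rho t)) delta.
Proof.
move=> x y xy; rewrite -(evalZ_delta t) -(conv_twist_Gdual_Gpoly rho_lt rho_euler rho_le_top xy).
by rewrite evalZ_conv; apply: eq_bigr => z _; rewrite evalZ_twist.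
Qed.

Lemma conv_Gdual_Bdual :
  eq_incidence (conv (twist rho u^-1 (Gd (u * v))) Bd) (Gd (u^-1 * v)).
Proof.
move=> x y xy; rewrite [RHS](_ : _ = Geval (rho_dual rho d) (u^-1 * v) y x) //.
rewrite -(@conv_Bval_Geval _ _ (rho_dual rho d) _ u^-1 v y x xy) conv_dual.
by apply: eq_bigr => z _; rewrite /twist rk_dual // invrK.
Qed.

Lemma Bval_dual : eq_incidence (Bval rho u v) (twist rho (-u) Bd).
Proof.
set P := twist rho (-1) (Gd (u * v)); set Gh := twist rho u (Geval rho (u^-1 * v)).
have P_Bd : eq_incidence (conv P (twist rho (-u) Bd))
                         (twist rho u (twist rho (-1) (Gd (u^-1 * v)))).
  move=> x y xy; rewrite twistM mulrN1 [RHS]/twist -(conv_Gdual_Bdual xy).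
  rewrite -/(twist rho (-u) (conv _ Bd) x y) twist_conv //.
  by apply: eq_conv => // a b _; rewrite twistM mulNr mulfV.
apply: (@conv_cancel_r _ _ _ Gh); first exact/unit_diag_twist/unit_diag_Geval.
apply: (@conv_cancel_l _ _ _ P); first exact/unit_diag_twist/unit_diag_evalZ/unit_diag_Gdual.
move=> x y xy; rewrite (eq_conv (fun _ _ _ => erefl) (conv_Bval_Geval rho u v)) //.
rewrite conv_twist_Gdual_Geval // -conv_assoc (eq_conv P_Bd (fun _ _ _ => erefl)) //.
rewrite /Gh -(twist_conv rho_lt _ _ _ xy).
by rewrite (eq_twist rho u (conv_twist_Gdual_Geval _) xy) twist_delta.
Qed.

End BDuality.

Unset Implicit Arguments.

Theorem theorem2p13 (disp : Order.disp_t) (T : finTBPOrderType disp)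
    (rho : T -> nat) (d : nat) :
  eulerian rho d ->
  forall (K : fieldType) (u v : K), u != 0 ->
  Bposet rho u v
  = (- u) ^+ d * Bposet (fun x : T^d => (d - rho x)%N) u^-1 v.
Proof.
move=> eulerP K u v u_neq0.
have := Bval_dual (eulerian_rho_lt eulerP) (eulerian_alt_sum eulerP)
  (eulerian_rho_le_top eulerP) v u_neq0 (le0x (Order.top : T)).
by rewrite /twist /Defs.rk (eulerian_rho_top eulerP) (eulerian_rho_bot eulerP) subn0.
Qed.
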